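(* Let $d,n$ be positive integers with $d\le n$. If $S\subseteq\mathbb{Z}_{2^n}$ is a union of some of the layers $L_1,\dots,L_{n+1}$ and $|S|>|\mathcal{C}_d|$, then $S$ contains a projective $d$-cube, i.e.\ there is a multiset $T$ of $d$ elements of $\mathbb{Z}_{2^n}$ with $\Sigma^*T\subseteq S$.
   Context: For a multiset $T=\{a_1,\dots,a_d\}$ of (not necessarily distinct) elements of $\mathbb{Z}_{2^n}$, $\Sigma^*T=\{\sum_{i\in I}a_i \bmod 2^n:\emptyset\ne I\subseteq[d]\}$. Layers: for $1\le i\le n$, $L_i=\{x\in\mathbb{Z}_{2^n}: x\equiv 2^{i-1}\pmod{2^i}\}$, $L_{n+1}=\{0\}$. Define index sets $I_1=\emptyset$ and, for $d\ge2$ with $\ell$ the largest integer with $2^\ell\le d$, $I_d=\{1,\dots,\ell\}\cup\{j+\ell+1: j\in I_{d-2^\ell+1}\}$; set $\mathcal{C}_d=\bigcup_{i\in I_d}L_i$ (for $d\le n$ all indices are at most $n$). *)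

From mathcomp Require Import all_boot.
Set Implicit Arguments. Unset Strict Implicit. Unset Printing Implicit Defensive.

Definition layer (n i : nat) : {set 'I_(2 ^ n)} :=
  if i == n.+1 then [set x : 'I_(2 ^ n) | val x == 0]
  else [set x : 'I_(2 ^ n) | val x %% 2 ^ i == 2 ^ i.-1].

(* Index sets I_d, computed with fuel k (fuel d suffices since the
   argument strictly decreases). *)
Fixpoint Iaux (k d : nat) : seq nat :=
  match k with
  | 0 => [::]
  | k'.+1 =>
      if d <= 1 then [::]
      else let l := trunc_log 2 d in
           iota 1 l ++ map (fun j => j + l + 1) (Iaux k' (d - 2 ^ l + 1))
  end.

Definition Iset (d : nat) : seq nat := Iaux d d.

Definition Cset (n d : nat) : {set 'I_(2 ^ n)} := \bigcup_(i <- Iset d) layer n i.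

Definition union_of_layers (n : nat) (S : {set 'I_(2 ^ n)}) : Prop :=
  exists J : seq nat, all (fun i => (1 <= i) && (i <= n.+1)) J /\
                      S = \bigcup_(i <- J) layer n i.

Definition has_proj_cube (n d : nat) (S : {set 'I_(2 ^ n)}) : Prop :=
  exists t : 'I_d -> 'I_(2 ^ n),
    forall I : {set 'I_d}, I != set0 ->
      exists2 y : 'I_(2 ^ n), y \in S & val y = (\sum_(i in I) val (t i)) %% 2 ^ n.

From mathcomp Require Import all_boot zify.

Set Implicit Arguments.
Unset Strict Implicit.
Unset Printing Implicit Defensive.

(* Membership of x in a union of layers only depends on the 2-adic valuation
   v(x) in {0, ..., n} of x mod 2^n, and 2^(n-1-a) residues have valuation
   a < n.  So |S| is a binary number whose digits, most significant first,
   tell which of the valuations 0, 1, ..., n occur in S, and |C_d| < |S| is a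
   lexicographic comparison.  Let l = trunc_log 2 d and d' = d - 2^l + 1:
   C_d has the valuations below l, not l, and above l it is C_d' shifted by
   l + 1.  Either S has all valuations up to min(l, n), and d copies of 1 form
   a cube since every subsum lies in [1, 2^(l+1)); or S agrees with C_d up to
   l and beats the shifted C_d' above l.  Then induction gives a cube T' of
   size d' for the shifted valuations, and 2^l - 1 ones together with
   2^(l+1) T' form a cube: a subsum using m >= 1 ones has valuation
   v(m) < l, any other one has valuation l + 1 + v(subsum of T'). *)

Definition vmod (n x : nat) : nat := if 2 ^ n %| x then n else logn 2 x.

Lemma eq_vmod n x (v : nat) :
  (vmod n x == v) = [&& v <= n, 2 ^ v %| x & (v < n) ==> ~~ (2 ^ v.+1 %| x)].
Proof.
rewrite /vmod; case: ifPn => [dvd_x|Ndvd_x].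
  have dvd_pow k : k <= n -> 2 ^ k %| x.
    by move=> le_kn; apply: dvdn_trans (dvdn_exp2l 2 le_kn) dvd_x.
  have [lt_vn|le_nv] := ltnP v n.
    by rewrite gtn_eqF // (dvd_pow v.+1 lt_vn) /= !andbF.
  rewrite eq_sym eqn_leq le_nv andbT implyFb andbT.
  by case le_vn: (v <= n); rewrite /= ?(dvd_pow v le_vn).
have x_gt0 : 0 < x by case: x Ndvd_x; rewrite ?dvdn0.
move: Ndvd_x; rewrite !pfactor_dvdn // -ltnNge => lt_x_n.
apply/eqP/and3P => [<-|[_ le_v /implyP lt_v]].
  by rewrite ltnW // leqnn ltnn implybT.
by apply/eqP; rewrite eqn_leq le_v leqNgt lt_v // (leq_ltn_trans le_v).
Qed.

Lemma vmod_spec n x :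
  [/\ vmod n x <= n, 2 ^ vmod n x %| x & vmod n x < n -> ~~ (2 ^ (vmod n x).+1 %| x)].
Proof. by have := eqxx (vmod n x); rewrite eq_vmod => /and3P[? ? /implyP]. Qed.

Lemma dvdn_modexp2 k n x : k <= n -> (2 ^ k %| x %% 2 ^ n) = (2 ^ k %| x).
Proof. by move=> le_kn; rewrite /dvdn (modn_dvdm _ (dvdn_exp2l 2 le_kn)). Qed.

Lemma vmod_mod n x : vmod n (x %% 2 ^ n) = vmod n x.
Proof.
apply/eqP; have [le_vn dvd_v Ndvd_v] := vmod_spec n x.
rewrite eq_vmod le_vn dvdn_modexp2 //= dvd_v; apply/implyP => lt_vn.
by rewrite dvdn_modexp2 // Ndvd_v.
Qed.

Lemma vmod_mul k j s : vmod (k + j) (2 ^ k * s) = k + vmod j s.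
Proof.
apply/eqP; have [le_vj dvd_v Ndvd_v] := vmod_spec j s.
rewrite eq_vmod leq_add2l le_vj -addnS !expnD !dvdn_pmul2l ?expn_gt0 // dvd_v /=.
by rewrite leq_add2l; apply/implyP.
Qed.

Lemma vmod_pow n a : a <= n -> vmod n (2 ^ a) = a.
Proof.
by move=> le_an; apply/eqP; rewrite eq_vmod le_an dvdnn dvdn_Pexp2l // ltnn implybT.
Qed.

Lemma vmod_odd n x : vmod n.+1 x.*2.+1 = 0.
Proof. by apply/eqP; rewrite eq_vmod dvd1n expn1 dvdn2 /= odd_double. Qed.

Lemma exp_logn_le m : 0 < m -> 2 ^ logn 2 m <= m.
Proof. by move=> m_gt0; apply: dvdn_leq m_gt0 (pfactor_dvdnn 2 m). Qed.

Lemma logn2_lt m k : 0 < m -> m < 2 ^ k -> logn 2 m < k.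
Proof.
move=> m_gt0 lt_m; rewrite -(ltn_exp2l _ _ (ltnSn 1)).
exact: leq_ltn_trans (exp_logn_le m_gt0) lt_m.
Qed.

Lemma vmod_le_logn n m : 0 < m -> vmod n m <= logn 2 m.
Proof. by move=> m_gt0; have [_ + _] := vmod_spec n m; rewrite pfactor_dvdn. Qed.

Lemma vmod_add_small n k m y : 0 < m < 2 ^ k -> k <= n -> 2 ^ k %| y ->
  vmod n (m + y) = logn 2 m.
Proof.
move=> /andP[m_gt0 lt_m] le_kn dvd_y.
have lt_log := logn2_lt m_gt0 lt_m.
have dvd_pow j : j <= k -> 2 ^ j %| y.
  by move=> le_jk; apply: dvdn_trans (dvdn_exp2l 2 le_jk) dvd_y.
apply/eqP; rewrite eq_vmod !dvdn_addl ?dvd_pow ?(ltnW lt_log) // pfactor_dvdnn.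
by rewrite pfactor_dvdn // ltnn implybT (leq_trans (ltnW lt_log)).
Qed.

Lemma modn_exp2S_eq x j :
  (x %% 2 ^ j.+1 == 2 ^ j) = (2 ^ j %| x) && ~~ (2 ^ j.+1 %| x).
Proof.
rewrite -(dvdn_modexp2 x (leqnSn j)) -(dvdn_modexp2 x (leqnn j.+1)).
have : x %% 2 ^ j.+1 < 2 ^ j.+1 by rewrite ltn_pmod ?expn_gt0.
move: (x %% _) => y lt_y; apply/eqP/andP => [->|[/dvdnP[q def_y] Ndvd_y]].
  by rewrite dvdnn dvdn_Pexp2l // ltnn.
have lt_q2 : q < 2 by rewrite -(ltn_pmul2r (expn_gt0 2 j)) -expnS -def_y.
by case: q lt_q2 def_y Ndvd_y => [|[|]] // _ ->; rewrite ?mul0n ?dvdn0 ?mul1n.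
Qed.

Lemma layer_vmod n i (x : 'I_(2 ^ n)) : (x \in layer n i) = (i == (vmod n x).+1).
Proof.
have lt_x := ltn_ord x; rewrite /layer; case: eqP => [->|ne_i]; rewrite inE.
  by rewrite eqSS (eq_sym n) eq_vmod leqnn ltnn andbT /dvdn modn_small.
case: i ne_i => [|j ne_j]; first by rewrite modn1.
rewrite modn_exp2S_eq eqSS eq_sym eq_vmod.
have [lt_jn|lt_nj] := ltnP j n; first by rewrite ltnW.
have ne_nj : n != j by apply/eqP => e; apply: ne_j; rewrite e.
rewrite leqNgt ltn_neqAle lt_nj andbT ne_nj /=.
case: (posnP x) => [->|x_gt0]; first by rewrite !dvdn0.
apply/negbTE/nandP; left; apply/negP => /(dvdn_leq x_gt0).
by rewrite leqNgt (leq_trans lt_x) // leq_exp2l // ltnW.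
Qed.

Lemma mem_bigcup_layers n J (x : 'I_(2 ^ n)) :
  (x \in \bigcup_(i <- J) layer n i) = ((vmod n x).+1 \in J).
Proof.
elim: J => [|i J IH]; first by rewrite big_nil inE.
by rewrite big_cons in_setU IH layer_vmod in_cons eq_sym.
Qed.

(* [weight n P] counts the residues mod 2^n whose valuation satisfies [P]:
   the booleans [P 0], ..., [P n] are its binary digits, most significant
   first, except that [P n.-1] and [P n] both have weight 1. *)
Fixpoint weight n (P : pred nat) : nat :=
  if n is n'.+1 then P 0 * 2 ^ n' + weight n' (fun a => P a.+1) else P 0.

Lemma eq_weight n (P Q : pred nat) : P =1 Q -> weight n P = weight n Q.
Proof.
elim: n P Q => [|n IH] P Q eqPQ /=; first by rewrite eqPQ.
by rewrite eqPQ (IH _ (fun a => Q a.+1)).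
Qed.

Lemma weight_pred0 n : weight n pred0 = 0.
Proof. by elim: n => //= n ->. Qed.

Lemma weight_le n P : weight n P <= 2 ^ n.
Proof.
elim: n P => [|n IH] P /=; first by case: (P 0).
by have := IH (fun a => P a.+1); rewrite expnS; case: (P 0) => /=; lia.
Qed.

Lemma weight_gt0 n P : 0 < weight n P -> exists2 a, a <= n & P a.
Proof.
elim: n P => [|n IH] P /=; first by case P0: (P 0) => // _; exists 0.
case P0: (P 0); first by exists 0.
by move=> /IH[a le_an Pa]; exists a.+1.
Qed.

Lemma sum_nat_double m F :
  \sum_(0 <= i < m.*2) F i = \sum_(0 <= i < m) F i.*2 + \sum_(0 <= i < m) F i.*2.+1.
Proof.
elim: m => [|m IH]; first by rewrite !big_geq.
by rewrite doubleS !big_nat_recr //= IH; lia.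
Qed.

Lemma sum_vmod n (P : pred nat) : \sum_(0 <= x < 2 ^ n) P (vmod n x) = weight n P.
Proof.
elim: n P => [|n IH] P; first by rewrite big_nat1 /vmod dvdn0.
rewrite expnS mul2n sum_nat_double /= -(IH (fun a => P a.+1)) addnC.
congr (_ + _).
  by under eq_bigr => x _ do rewrite vmod_odd; rewrite sum_nat_const_nat subn0 mulnC.
by apply: eq_big_nat => x _; have := vmod_mul 1 n x; rewrite add1n expn1 mul2n => ->.
Qed.

Lemma card_layers n J :
  #|\bigcup_(i <- J) layer n i| = weight n (fun a => a.+1 \in J).
Proof.
rewrite -sum_vmod -sum1_card big_mkord big_mkcond /=.
by apply: eq_bigr => x _; rewrite mem_bigcup_layers; case: (_ \in J).
Qed.

Lemma weight_lt_prefix k n (P Q : pred nat) : k <= n ->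
  (forall a, a < k -> Q a) -> weight n Q < weight n P ->
  (forall a, a < k -> P a) /\
  weight (n - k) (fun a => Q (k + a)) < weight (n - k) (fun a => P (k + a)).
Proof.
elim: k n P Q => [|k IH] n P Q le_kn Q_low lt_QP; first by rewrite subn0.
case: n le_kn lt_QP => [|n] //= le_kn.
rewrite Q_low //; case P0: (P 0) => /=; last first.
  by have := weight_le n (fun a => Q a.+1); have := weight_le n (fun a => P a.+1); lia.
rewrite ltn_add2l => /IH[//|a lt_ak|P_low lt_tail]; first exact: Q_low.
by split; [case | rewrite subSS].
Qed.

Lemma trunc_log2_bounds d : 1 < d -> 2 <= 2 ^ trunc_log 2 d <= d.
Proof.
move=> lt_1d; rewrite trunc_logP ?(ltnW lt_1d) // andbT.
by rewrite -[leqLHS]expn1 leq_exp2l // trunc_log_gt0.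
Qed.

Lemma Iaux_fuel k1 k2 d : d <= k1 -> d <= k2 -> Iaux k1 d = Iaux k2 d.
Proof.
elim: k1 k2 d => [|k1 IH] [|k2] d //=; try by case: d => //= _ _; case: ifP.
case: ifPn => // /negbTE; rewrite leqNgt => /negbFE /trunc_log2_bounds bounds le_d1 le_d2.
by congr (_ ++ map _ _); apply: IH; lia.
Qed.

Lemma Iset_rec d : 1 < d ->
  Iset d = iota 1 (trunc_log 2 d) ++
    map (fun j => j + trunc_log 2 d + 1) (Iset (d - 2 ^ trunc_log 2 d + 1)).
Proof.
move=> lt_1d; have := trunc_log2_bounds lt_1d.
rewrite /Iset; case: d lt_1d => [|d] //= lt_1d bounds; rewrite leqNgt lt_1d /=.
by congr (_ ++ map _ _); apply: Iaux_fuel; lia.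
Qed.

Lemma Iaux_gt0 k d : 0 \notin Iaux k d.
Proof.
elim: k d => [|k IH] d //=; case: ifP => // _.
by rewrite mem_cat mem_iota negb_or /=; apply/mapP => [[j _]]; rewrite addn1.
Qed.

(* The valuations occurring in [Cset n d]; the layer [L_i] consists of the
   residues of valuation [i - 1]. *)
Definition Cval d : pred nat := fun a => a.+1 \in Iset d.

Lemma Cval_rec d a : 1 < d ->
  let l := trunc_log 2 d in
  Cval d a = (a < l) || (l < a) && Cval (d - 2 ^ l + 1) (a - l.+1).
Proof.
move=> lt_1d l; rewrite /Cval Iset_rec // -/l mem_cat mem_iota add1n ltnS /= ltnS.
have [//|le_la] := ltnP a l; have [lt_la|] := ltnP l a.
  rewrite (_ : a.+1 = (a - l.+1).+1 + l + 1); last by lia.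
  by rewrite (mem_map (f := fun j => j + l + 1)) // => i j /addIn /addIn.
rewrite leqNgt => /negbTE lt_al; apply/mapP => [[j]].
by move=> + def_a; rewrite (_ : j = 0) ?(negbTE (Iaux_gt0 _ _)) //; lia.
Qed.

Lemma weight_Cval_lt d n (P : pred nat) : 1 < d ->
  let l := trunc_log 2 d in
  weight n (Cval d) < weight n P ->
  (forall a, a <= minn l n -> P a) \/
  [/\ l < n, forall a, a < l -> P a &
      weight (n - l.+1) (Cval (d - 2 ^ l + 1)) < weight (n - l.+1) (fun a => P (l.+1 + a))].
Proof.
move=> lt_1d l lt_weight.
have Cval_low a : a < l -> Cval d a by move=> lt_al; rewrite Cval_rec // lt_al.
have [le_nl|lt_ln] := leqP n l.
  have [|P_low] := weight_lt_prefix (leqnn n) _ lt_weight.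
    by move=> a lt_an; apply/Cval_low/(leq_trans lt_an).
  rewrite subnn /= addn0 => lt_Pn; left => a.
  rewrite leq_eqVlt => /predU1P[->|/P_low//].
  by case: (P n) lt_Pn; rewrite ltnNge.
have [P_low] := weight_lt_prefix (ltnW lt_ln) Cval_low lt_weight.
rewrite (_ : n - l = (n - l.+1).+1) /=; last by lia.
have -> : Cval d (l + 0) = false by rewrite addn0 Cval_rec // ltnn.
case Pl: (P (l + 0)) => /=.
  by left => a; rewrite leq_eqVlt => /predU1P[->|/P_low//]; rewrite -(addn0 l) Pl.
move=> lt_tail; right; split=> //; move: lt_tail.
rewrite (@eq_weight _ (fun a => Cval d (l + a.+1)) (Cval (d - 2 ^ l + 1))).
  rewrite (@eq_weight _ (fun a => P (l + a.+1)) (fun a => P (l.+1 + a))) //.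
  by move=> a; rewrite addnS.
move=> a; rewrite Cval_rec // -/l (_ : l + a.+1 - l.+1 = a); last by lia.
by rewrite ltnNge leq_addr addnS ltnS leq_addr.
Qed.

Definition proj_cube_val n d (P : pred nat) (t : 'I_d -> nat) :=
  forall I : {set 'I_d}, I != set0 -> P (vmod n (\sum_(i in I) t i)).
Arguments proj_cube_val n d P t : clear implicits.

Lemma proj_cube_val1 n a (P : pred nat) : a <= n -> P a ->
  proj_cube_val n 1 P (fun _ => 2 ^ a).
Proof.
move=> le_an Pa I; rewrite sum_nat_const -card_gt0 => I_gt0.
have le_I1 := max_card I; rewrite card_ord in le_I1.
by rewrite (_ : #|I| = 1) ?mul1n ?vmod_pow //; lia.
Qed.

Lemma proj_cube_val_ones n d (P : pred nat) :
  (forall a, a <= minn (trunc_log 2 d) n -> P a) -> proj_cube_val n d P (fun _ => 1).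
Proof.
move=> P_low I; rewrite sum1_card -card_gt0 => I_gt0; apply: P_low.
have [le_vn _ _] := vmod_spec n #|I|; rewrite leq_min le_vn andbT.
apply: leq_trans (vmod_le_logn _ I_gt0) (trunc_log_max _ _) => //.
by rewrite (leq_trans (exp_logn_le I_gt0)) // -[leqRHS]card_ord max_card.
Qed.

Lemma sum_split_set m k (I : {set 'I_(m + k)}) (F : 'I_(m + k) -> nat) :
  \sum_(i in I) F i = \sum_(i in [set i | lshift k i \in I]) F (lshift k i) +
                      \sum_(j in [set j | rshift m j \in I]) F (rshift m j).
Proof. by rewrite big_split_ord; congr (_ + _); apply: eq_bigl => i; rewrite inE. Qed.

Lemma proj_cube_val_glue n l c d (P : pred nat) t : c < 2 ^ l -> l < n ->
  (forall a, a < l -> P a) -> proj_cube_val (n - l.+1) d (fun a => P (l.+1 + a)) t ->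
  proj_cube_val n (c + d) P (fun i => if split i is inr j then 2 ^ l.+1 * t j else 1).
Proof.
move=> lt_cl lt_ln P_low cube_t I nzI.
rewrite sum_split_set; set IL := [set i | _]; set IR := [set j | _].
have split_l i : split (lshift d i) = inl i := unsplitK (inl _ i).
have split_r j : split (rshift c j) = inr j := unsplitK (inr _ j).
rewrite (eq_bigr (fun=> 1)) => [|i _]; last by rewrite split_l.
rewrite (eq_bigr (fun j => 2 ^ l.+1 * t j)) => [|j _]; last by rewrite split_r.
rewrite sum1_card -big_distrr /=; have [IL0|IL_gt0] := posnP #|IL|.
  have nzIR : IR != set0.
    apply: contraNneq nzI => IR0; apply/eqP/setP => i; rewrite inE.
    move/setP: IR0 => IR0; have /setP IL0' := cards0_eq IL0.
    by case: (split_ordP i) => j ->; [move: (IL0' j) | move: (IR0 j)]; rewrite !inE.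
  by rewrite IL0 -{1}(subnKC lt_ln) vmod_mul; apply: cube_t.
have le_ILc : #|IL| <= c by rewrite -[leqRHS]card_ord max_card.
have lt_ILl : #|IL| < 2 ^ l := leq_ltn_trans le_ILc lt_cl.
rewrite (vmod_add_small (k := l)) ?IL_gt0 ?(ltnW lt_ln) //.
  exact/P_low/logn2_lt.
by rewrite dvdn_mulr // dvdn_exp2l.
Qed.

Lemma proj_cube_val_exists d n (P : pred nat) : 0 < d ->
  weight n (Cval d) < weight n P -> exists t, proj_cube_val n d P t.
Proof.
elim/ltn_ind: d n P => d IH n P d_gt0 lt_weight.
have [le_d1|lt_1d] := leqP d 1.
  move: lt_weight; have -> : d = 1 by lia.
  rewrite (@eq_weight _ _ pred0) // weight_pred0 => /weight_gt0[a le_an Pa].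
  by exists (fun _ => 2 ^ a); apply: proj_cube_val1.
have /andP[le_2l le_ld] := trunc_log2_bounds lt_1d.
case: (weight_Cval_lt lt_1d lt_weight) => [P_low|[lt_ln P_low lt_tail]].
  by exists (fun _ => 1); apply: proj_cube_val_ones.
have [||t cube_t] := IH _ _ _ _ _ lt_tail; [lia | lia |].
rewrite (_ : d = (2 ^ trunc_log 2 d).-1 + (d - 2 ^ trunc_log 2 d + 1)); last by lia.
by eexists; apply: proj_cube_val_glue cube_t; rewrite ?prednK ?expn_gt0.
Qed.

Theorem claim3p2 (d n : nat) (S : {set 'I_(2 ^ n)}) :
  0 < d -> d <= n -> union_of_layers S -> #|Cset n d| < #|S| ->
  has_proj_cube d S.
Proof.
move=> d_gt0 _ [J [_ ->]]; rewrite /Cset !card_layers => lt_weight.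
have [t cube_t] := proj_cube_val_exists d_gt0 lt_weight.
have pow_gt0 : 0 < 2 ^ n := expn_gt0 2 n.
exists (fun i => Ordinal (ltn_pmod (t i) pow_gt0)) => I nzI.
exists (Ordinal (ltn_pmod (\sum_(i in I) t i) pow_gt0)); last by rewrite /= -modn_summ.
by rewrite mem_bigcup_layers /= vmod_mod; apply: cube_t.
Qed.
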